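(* Let $R$ be a unital associative ring. For every $A\in\widehat{\cal S}$ there is $x=x(A)\in R^*$ such that $\Phi^2(A)=x^{-1}\Phi^{-1}(A)x$. In particular, $\Phi^2(A)\sim\Phi^{-1}(A)$.
   Context: $R^*$: units of $R$. $M_3^*(R)$: invertible $3\times3$ matrices; $M_3^\star(R)$: matrices with all entries in $R^*$. $J_1(M)=M^{-1}$ on $M_3^*(R)$; $J_2(M)_{jk}=(M_{kj})^{-1}$ on $M_3^\star(R)$; $J=J_2\circ J_1$, $J^{-1}=J_1\circ J_2$, where $g\circ f$ has domain $\{x\in{\rm dom}(f):f(x)\in{\rm dom}(g)\}$. $\widehat M_3(R)$: matrices whose first row and column consist of $1$'s. For $A=\{a_{j,k}\}\in M_3^\star(R)$: $\Lambda^L(A)_{j,k}=a_{1,1}a_{j,1}^{-1}a_{j,k}a_{1,k}^{-1}$, $\Lambda^R(A)_{j,k}=a_{j,1}^{-1}a_{j,k}a_{1,k}^{-1}a_{1,1}$. $\Phi(A)=J_2(\Lambda^L(A^{-1}))$ with ${\rm dom}(\Phi)={\rm dom}(J)\cap\widehat M_3(R)\cap M_3^\star(R)$; $\Phi^2=\Phi\circ\Phi$; $\Phi^{-1}(A)=\Lambda^R(J^{-1}(A))$ with domain $\widehat M_3(R)\cap\{M\in{\rm dom}(J^{-1}):J^{-1}(M)\in M_3^\star(R)\}$. ${\cal S}=\{M\in M_3(R):$ all square submatrices of $M$ are invertible and $J_2(M)$ is invertible$\}$, $\widehat{\cal S}={\cal S}\cap\widehat M_3(R)$. For a matrix $B$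 and $x\in R^*$, $x^{-1}Bx$ is the matrix with entries $x^{-1}B_{jk}x$. $A\sim B$ means $B=D_1^{-1}AD_2$ for invertible diagonal $D_1,D_2$. *)

(* R : unitRingType = unital associative (possibly non-commutative) ring,
   R^* = {x | x \is a GRing.unit}. Partial maps are modelled as option-valued functions. *)
From HB Require Import structures.
From mathcomp Require Import all_boot all_order all_algebra.
From Stdlib Require Import ClassicalEpsilon.
Set Implicit Arguments. Unset Strict Implicit. Unset Printing Implicit Defensive.
Import GRing.Theory.
Local Open Scope ring_scope.

Section Defs.
Variable R : unitRingType.

Definition mx_invertible n (M : 'M[R]_n) : Prop :=
  exists N : 'M[R]_n, M *m N = 1%:M /\ N *m M = 1%:M.

(* J_1(M) = M^{-1}, defined on M_3^*(R) (the two-sided inverse is unique) *)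
Definition J1 (M : 'M[R]_3) : option 'M[R]_3 :=
  match excluded_middle_informative (exists N : 'M[R]_3, M *m N = 1%:M /\ N *m M = 1%:M) with
  | left h => Some (proj1_sig (constructive_indefinite_description _ h))
  | right _ => None
  end.

(* M_3^star(R): all entries are units *)
Definition allunit (M : 'M[R]_3) : bool := [forall i, forall j, M i j \is a GRing.unit].

Definition J2 (M : 'M[R]_3) : option 'M[R]_3 :=
  if allunit M then Some (\matrix_(j, k) (M k j)^-1) else None.

Definition J (M : 'M[R]_3) : option 'M[R]_3 :=
  match J1 M with Some B => J2 B | None => None end.
Definition Jinv (M : 'M[R]_3) : option 'M[R]_3 :=
  match J2 M with Some B => J1 B | None => None end.

(* \hat M_3(R): first row and first column consist of 1's (index 0 = "1") *)
Definition hatM (M : 'M[R]_3) : bool := [forall i, (M 0 i == 1) && (M i 0 == 1)].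

Definition LamL (A : 'M[R]_3) : 'M[R]_3 :=
  \matrix_(j, k) (A 0 0 * (A j 0)^-1 * A j k * (A 0 k)^-1).
Definition LamR (A : 'M[R]_3) : 'M[R]_3 :=
  \matrix_(j, k) ((A j 0)^-1 * A j k * (A 0 k)^-1 * A 0 0).

(* Phi(A) = J_2(Lambda^L(A^{-1})), dom = dom(J) ∩ \hat M_3 ∩ M_3^star *)
Definition Phi (A : 'M[R]_3) : option 'M[R]_3 :=
  if hatM A && allunit A then
    match J1 A with
    | Some B => if allunit B then J2 (LamL B) else None
    | None => None
    end
  else None.

Definition Phi2 (A : 'M[R]_3) : option 'M[R]_3 :=
  match Phi A with Some B => Phi B | None => None end.

(* Phi^{-1}(A) = Lambda^R(J^{-1}(A)), dom = \hat M_3 ∩ {M in dom J^{-1} : J^{-1}(M) in M_3^star} *)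
Definition PhiInv (A : 'M[R]_3) : option 'M[R]_3 :=
  if hatM A then
    match Jinv A with
    | Some B => if allunit B then Some (LamR B) else None
    | None => None
    end
  else None.

(* S: all square submatrices invertible and J_2(M) (defined and) invertible *)
Definition inS (M : 'M[R]_3) : Prop :=
  (forall (k : nat) (f g : 'I_k -> 'I_3),
      {homo f : i j / (i < j)%N} -> {homo g : i j / (i < j)%N} ->
      mx_invertible (mxsub f g M)) /\
  (exists N, J2 M = Some N /\ mx_invertible N).

Definition inShat (M : 'M[R]_3) : Prop := inS M /\ hatM M.

Definition conjx (x : R) (B : 'M[R]_3) : 'M[R]_3 := \matrix_(j, k) (x^-1 * B j k * x).

Definition mxsim (A B : 'M[R]_3) : Prop :=
  exists D1 D1' D2 : 'M[R]_3,
    is_diag_mx D1 /\ is_diag_mx D2 /\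
    D1 *m D1' = 1%:M /\ D1' *m D1 = 1%:M /\ mx_invertible D2 /\
    B = D1' *m A *m D2.
End Defs.

(* Write a matrix of \hat S as A = [[1, 1, 1], [1, a, b], [1, c, d]].  Like that of
   any such "hat" matrix, its inverse is given explicitly by the inverse N of the
   reduced 2x2 matrix [[a - 1, b - 1], [c - 1, d - 1]]; its corner entry is the
   inverse of the Schur complement sg = 1 - (sum of the entries of [[a, b], [c, d]]^-1).
   Hence Phi(A) is again a hat matrix, with reduced matrix W * sg, where W collects
   the entry-wise inverses of the reduced matrix of J2(A).  The key 2x2 fact is that
   J2 preserves invertibility: the inverse of [[a^-1, c^-1], [b^-1, d^-1]] is explicit
   in terms of [[a, b], [c, d]]^-1.  Applied to the reduced matrix of J2(A), it
   inverts W, so Phi(A)^-1 is explicit, and comparing entries shows that Phi(A)^-1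
   is a diagonal rescaling D1 * J2(J^-1(A)) * D2.  Since J2 o Lambda^L turns such a
   rescaling of J2(M) into a conjugate of Lambda^R(M), Phi^2(A) is conjugate to
   Phi^-1(A) = Lambda^R(J^-1(A)). *)

From mathcomp Require Import all_boot all_order all_algebra.
From Stdlib Require Import ClassicalEpsilon.
From Stdlib Require Ncring Ncring_tac.
Import GRing.Theory.
Local Open Scope ring_scope.
Set Implicit Arguments.
Unset Strict Implicit.
Unset Printing Implicit Defensive.

Section HatMatrices.
Variable R : unitRingType.
Implicit Types (p q r s al be ga de a b c d x y z : R).

#[local] Instance R_ring_ops :
  @Ncring.Ring_ops R 0 1 +%R *%R (fun x y => x - y) -%R eq := {}.
#[local] Instance R_ring :
  @Ncring.Ring R 0 1 +%R *%R (fun x y => x - y) -%R eq R_ring_ops.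
Proof.
constructor; cbv [Algebra_syntax.equality Ncring.eq_notation
  Algebra_syntax.addition Ncring.add_notation
  Algebra_syntax.multiplication Ncring.mul_notation
  Algebra_syntax.zero Ncring.zero_notation Algebra_syntax.one Ncring.one_notation
  Algebra_syntax.opposite Ncring.opp_notation
  Algebra_syntax.subtraction Ncring.sub_notation].
- exact: RelationClasses.eq_equivalence.
- by move=> x y -> x' y' ->.
- by move=> x y -> x' y' ->.
- by move=> x y -> x' y' ->.
- by move=> x y ->.
- by move=> x; rewrite add0r.
- by move=> x y; rewrite addrC.
- by move=> *; rewrite addrA.
- by move=> x; rewrite mul1r.
- by move=> x; rewrite mulr1.
- by move=> *; rewrite mulrA.
- by move=> *; rewrite mulrDl.
- by move=> *; rewrite mulrDr.
- by [].
- by move=> x; rewrite subrr.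
Qed.

Lemma eq_of_subr x y e : x - y = e -> e = 0 -> x = y.
Proof. by move=> h1 h2; apply/eqP; rewrite -subr_eq0 h1 h2. Qed.

Lemma resid {x y} : x = y -> x - y = 0.
Proof. by move=> ->; rewrite subrr. Qed.

Ltac ncring := Ncring_tac.non_commutative_ring.

(* [cert e] proves [x = y] in the free noncommutative ring by checking
   [x - y = e]; the certificate [e] is a combination of residuals [u - v] of
   hypotheses [u = v], which the remaining goal [e = 0] rewrites to [0]. *)
Ltac cert e := apply: (@eq_of_subr _ _ e); [ncring|].
Ltac drop0 := rewrite ?(mulr0, mul0r, oppr0, addr0, add0r, subr0, sub0r).

Lemma unitrM_units x y : x \is a GRing.unit -> y \is a GRing.unit -> x * y \is a GRing.unit.
Proof. by move=> Ux Uy; rewrite unitrMl. Qed.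

Lemma two_sided_invr x y : x * y = 1 -> y * x = 1 -> x \is a GRing.unit /\ x^-1 = y.
Proof.
move=> xy yx; have Ux : x \is a GRing.unit by apply/unitrP; exists y.
by split=> //; rewrite -[x^-1]mulr1 -xy mulKr.
Qed.

Lemma invr_invrB1 x : x \is a GRing.unit -> x - 1 \is a GRing.unit ->
  x^-1 - 1 \is a GRing.unit /\ (x^-1 - 1)^-1 = -(1 + (x - 1)^-1).
Proof.
move=> Ux Ux1; apply: two_sided_invr.
- cert (x^-1 * ((x - 1) * (x - 1)^-1 - 1) - (x^-1 * x - 1) * (x - 1)^-1).
  by rewrite (resid (mulrV Ux1)) (resid (mulVr Ux)); drop0.
- cert (((x - 1)^-1 * (x - 1) - 1) * x^-1 - (x - 1)^-1 * (x * x^-1 - 1)).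
  by rewrite (resid (mulVr Ux1)) (resid (mulrV Ux)); drop0.
Qed.

Lemma subr1B1 x y : (x - 1) - (y - 1) = x - y.
Proof. ncring. Qed.

Lemma subr_invr x y : x \is a GRing.unit -> y \is a GRing.unit ->
  x^-1 - y^-1 = x^-1 * (y - x) * y^-1.
Proof.
move=> Ux Uy; cert (- x^-1 * (y * y^-1 - 1) + (x^-1 * x - 1) * y^-1).
by rewrite (resid (mulrV Uy)) (resid (mulVr Ux)); drop0.
Qed.

Lemma invrM3 x y z : x \is a GRing.unit -> y \is a GRing.unit -> z \is a GRing.unit ->
  (x * y * z)^-1 = z^-1 * y^-1 * x^-1.
Proof. by move=> Ux Uy Uz; rewrite !invrM ?unitrM_units // mulrA. Qed.

(** * Inverses of 2 x 2 matrices *)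

Definition mx_inverse {n} (M N : 'M[R]_n) : Prop := M *m N = 1%:M /\ N *m M = 1%:M.

Lemma mx_inverse_unique {n} (M N N' : 'M[R]_n) :
  mx_inverse M N -> mx_inverse M N' -> N = N'.
Proof. by move=> [_ NM] [MN' _]; rewrite -[N]mulmx1 -MN' mulmxA NM mul1mx. Qed.

Definition mx2 p q r s : 'M[R]_2 :=
  \matrix_(i, j) match (i : nat), (j : nat) with
                 | O, O => p | O, _ => q | _, O => r | _, _ => s end.

Lemma ord2P (i : 'I_2) : i = 0 \/ i = 1.
Proof. by case: i => [[|[|//]] Hi]; [left|right]; apply: val_inj. Qed.

Lemma mx2_eta (M : 'M[R]_2) : M = mx2 (M 0 0) (M 0 1) (M 1 0) (M 1 1).
Proof.
by apply/matrixP => i j; rewrite mxE; case: (ord2P i) => ->; case: (ord2P j) => ->.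
Qed.

Lemma mulmx2 p q r s al be ga de :
  mx2 p q r s *m mx2 al be ga de =
  mx2 (p * al + q * ga) (p * be + q * de) (r * al + s * ga) (r * be + s * de).
Proof.
apply/matrixP => i j; rewrite !mxE !big_ord_recl big_ord0 addr0 !mxE.
by case: (ord2P i) => ->; case: (ord2P j) => ->.
Qed.

Lemma mx2_1 : 1%:M = mx2 1 0 0 1.
Proof.
by apply/matrixP => i j; rewrite !mxE; case: (ord2P i) => ->; case: (ord2P j) => ->.
Qed.

Lemma mx2_inj p q r s p' q' r' s' :
  mx2 p q r s = mx2 p' q' r' s' -> [/\ p = p', q = q', r = r' & s = s'].
Proof.
by move=> e; split; [move/matrixP/(_ 0 0): e|move/matrixP/(_ 0 1): e
  |move/matrixP/(_ 1 0): e|move/matrixP/(_ 1 1): e]; rewrite !mxE.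
Qed.

Lemma mx_inverse2P p q r s al be ga de :
  mx_inverse (mx2 p q r s) (mx2 al be ga de) <->
  [/\ p * al + q * ga = 1, p * be + q * de = 0, r * al + s * ga = 0
    & r * be + s * de = 1] /\
  [/\ al * p + be * r = 1, al * q + be * s = 0, ga * p + de * r = 0
    & ga * q + de * s = 1].
Proof.
rewrite /mx_inverse !mulmx2 mx2_1; split.
  by case=> /mx2_inj[-> -> -> ->] /mx2_inj[-> -> -> ->].
by case=> -[-> -> -> ->] [-> -> -> ->].
Qed.

Lemma mx_inverse2_swap_rows p q r s al be ga de :
  mx_inverse (mx2 p q r s) (mx2 al be ga de) ->
  mx_inverse (mx2 r s p q) (mx2 be al de ga).
Proof.
case/mx_inverse2P => -[h1 h2 h3 h4] [h5 h6 h7 h8].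
by apply/mx_inverse2P; split; split; rewrite // addrC.
Qed.

Lemma mx_inverse2_swap_cols p q r s al be ga de :
  mx_inverse (mx2 p q r s) (mx2 al be ga de) ->
  mx_inverse (mx2 q p s r) (mx2 ga de al be).
Proof.
case/mx_inverse2P => -[h1 h2 h3 h4] [h5 h6 h7 h8].
by apply/mx_inverse2P; split; split; rewrite // addrC.
Qed.

Section Inverse2.
Variables p q r s al be ga de : R.
Hypothesis MN : mx_inverse (mx2 p q r s) (mx2 al be ga de).
Let h1 : p * al + q * ga = 1. Proof. by case/mx_inverse2P: MN => -[-> _ _ _]. Qed.
Let h3 : r * al + s * ga = 0. Proof. by case/mx_inverse2P: MN => -[_ _ -> _]. Qed.
Let h4 : r * be + s * de = 1. Proof. by case/mx_inverse2P: MN => -[_ _ _ ->]. Qed.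
Let h5 : al * p + be * r = 1. Proof. by case/mx_inverse2P: MN => _ [-> _ _ _]. Qed.
Let h6 : al * q + be * s = 0. Proof. by case/mx_inverse2P: MN => _ [_ -> _ _]. Qed.
Hypothesis Us : s \is a GRing.unit.

Lemma mx_inverse2_unit11 : al \is a GRing.unit.
Proof.
apply/unitrP; exists (p - q * s^-1 * r); split.
- cert ((p * al + q * ga - 1) - q * s^-1 * (r * al + s * ga - 0) + q * (s^-1 * s - 1) * ga).
  by rewrite (resid h1) (resid h3) (resid (mulVr Us)); drop0.
- cert ((al * p + be * r - 1) - (al * q + be * s - 0) * s^-1 * r + be * (s * s^-1 - 1) * r).
  by rewrite (resid h5) (resid h6) (resid (mulrV Us)); drop0.
Qed.

Lemma mx_inverse2_rowsum1 : al + be = al * (s - q) * s^-1.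
Proof.
cert ((al * q + be * s - 0) * s^-1 - be * (s * s^-1 - 1) - al * (s * s^-1 - 1)).
by rewrite (resid h6) (resid (mulrV Us)); drop0.
Qed.

Lemma mx_inverse2_colsum1 : al + ga = s^-1 * (s - r) * al.
Proof.
cert (s^-1 * (r * al + s * ga - 0) - (s^-1 * s - 1) * ga - (s^-1 * s - 1) * al).
by rewrite (resid h3) (resid (mulVr Us)); drop0.
Qed.

Lemma mx_inverse2_colsum_rowsum11 :
  (al + ga) * al^-1 * (al + be) = 1 + (al + be + ga + de) - (1 + s^-1).
Proof.
have Ual := mx_inverse2_unit11.
cert ((al * al^-1 - 1) * al + (al * al^-1 - 1) * be + ga * (al^-1 * al - 1)
  + s^-1 * (r * al + s * ga - 0) * al^-1 * be - (s^-1 * s - 1) * ga * al^-1 * be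
  - s^-1 * r * (al * al^-1 - 1) * be - s^-1 * (r * be + s * de - 1) + (s^-1 * s - 1) * de).
by rewrite (resid h3) (resid h4) (resid (mulrV Ual))
  (resid (mulVr Ual)) (resid (mulVr Us)); drop0.
Qed.

End Inverse2.

(* Swapping the rows of [M] swaps the columns of its inverse and vice versa, which
   transports the facts about the (1,1) entry to the other three. *)
Section Inverse2Symmetric.
Variables p q r s al be ga de : R.
Hypothesis MN : mx_inverse (mx2 p q r s) (mx2 al be ga de).
Hypotheses (Up : p \is a GRing.unit) (Uq : q \is a GRing.unit)
  (Ur : r \is a GRing.unit) (Us : s \is a GRing.unit).
Let MN_r := mx_inverse2_swap_rows MN.
Let MN_c := mx_inverse2_swap_cols MN.
Let MN_rc := mx_inverse2_swap_cols MN_r.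

Lemma mx_inverse2_units :
  [/\ al \is a GRing.unit, be \is a GRing.unit, ga \is a GRing.unit
    & de \is a GRing.unit].
Proof.
split; [exact: mx_inverse2_unit11 MN Us | exact: mx_inverse2_unit11 MN_r Uq
  | exact: mx_inverse2_unit11 MN_c Ur | exact: mx_inverse2_unit11 MN_rc Up].
Qed.

Lemma mx_inverse2_sums_units :
  s - q \is a GRing.unit -> s - r \is a GRing.unit ->
  q - p \is a GRing.unit -> r - p \is a GRing.unit ->
  [/\ al + be \is a GRing.unit, al + ga \is a GRing.unit,
      be + de \is a GRing.unit & ga + de \is a GRing.unit].
Proof.
move=> Usq Usr Uqp Urp; have [Ual Ube Uga _] := mx_inverse2_units.
split.
- by rewrite (mx_inverse2_rowsum1 MN Us) !unitrM_units ?unitrV.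
- by rewrite (mx_inverse2_colsum1 MN Us) !unitrM_units ?unitrV.
- by rewrite (mx_inverse2_colsum1 MN_r Uq) !unitrM_units ?unitrV.
- by rewrite (mx_inverse2_rowsum1 MN_c Ur) !unitrM_units ?unitrV.
Qed.

Lemma mx_inverse2_colsum_rowsum :
  [/\ (al + ga) * al^-1 * (al + be) = 1 + (al + be + ga + de) - (1 + s^-1),
      (al + ga) * ga^-1 * (ga + de) = 1 + (al + be + ga + de) - (1 + r^-1),
      (be + de) * be^-1 * (al + be) = 1 + (al + be + ga + de) - (1 + q^-1)
    & (be + de) * de^-1 * (ga + de) = 1 + (al + be + ga + de) - (1 + p^-1)].
Proof.
split; [exact: mx_inverse2_colsum_rowsum11 MN Us
  | refine (etrans _ (etrans (mx_inverse2_colsum_rowsum11 MN_c Ur) _))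
  | refine (etrans _ (etrans (mx_inverse2_colsum_rowsum11 MN_r Uq) _))
  | refine (etrans _ (etrans (mx_inverse2_colsum_rowsum11 MN_rc Up) _))]; ncring.
Qed.

End Inverse2Symmetric.

Lemma mx_inverse2_unit_row y z al be ga de :
  mx_inverse (mx2 1 1 y z) (mx2 al be ga de) -> z - y \is a GRing.unit.
Proof.
case/mx_inverse2P => -[_ e2 _ e4] [_ _ f3 f4]; apply/unitrP; exists de; split.
- cert ((ga * 1 + de * z - 1) - (ga * 1 + de * y - 0)).
  by rewrite (resid f4) (resid f3); drop0.
- cert ((y * be + z * de - 1) - y * (1 * be + 1 * de - 0)).
  by rewrite (resid e4) (resid e2); drop0.
Qed.

Lemma mx_inverse2_unit_col y z al be ga de :
  mx_inverse (mx2 1 y 1 z) (mx2 al be ga de) -> z - y \is a GRing.unit.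
Proof.
case/mx_inverse2P => -[_ e2 _ e4] [_ _ f3 f4]; apply/unitrP; exists de; split.
- cert ((ga * y + de * z - 1) - (ga * 1 + de * 1 - 0) * y).
  by rewrite (resid f4) (resid f3); drop0.
- cert ((1 * be + z * de - 1) - (1 * be + y * de - 0)).
  by rewrite (resid e4) (resid e2); drop0.
Qed.

Section InverseJ2.
Variables a b c d t11 t12 t21 t22 : R.
Hypothesis XT : mx_inverse (mx2 a b c d) (mx2 t11 t12 t21 t22).
Hypotheses (Ua : a \is a GRing.unit) (Ub : b \is a GRing.unit)
  (Uc : c \is a GRing.unit) (Ud : d \is a GRing.unit).
Let xt12 : a * t12 + b * t22 = 0. Proof. by case/mx_inverse2P: XT => -[_ -> _ _]. Qed.
Let xt21 : c * t11 + d * t21 = 0. Proof. by case/mx_inverse2P: XT => -[_ _ -> _]. Qed.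
Let tx11 : t11 * a + t12 * c = 1. Proof. by case/mx_inverse2P: XT => _ [-> _ _ _]. Qed.
Let tx12 : t11 * b + t12 * d = 0. Proof. by case/mx_inverse2P: XT => _ [_ -> _ _]. Qed.
Let tx21 : t21 * a + t22 * c = 0. Proof. by case/mx_inverse2P: XT => _ [_ _ -> _]. Qed.
Let tx22 : t21 * b + t22 * d = 1. Proof. by case/mx_inverse2P: XT => _ [_ _ _ ->]. Qed.

Lemma mx_inverse2_J2 :
  mx_inverse (mx2 a^-1 c^-1 b^-1 d^-1)
    (mx2 (a * t12 * c) (-(a * t12 * d)) (-(d * t21 * a)) (d * t21 * b)).
Proof.
apply/mx_inverse2P; split; split.
- cert ((a^-1 * a - 1) * t12 * c - c^-1 * (c * t11 + d * t21 - 0) * a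
    + (c^-1 * c - 1) * t11 * a + (t11 * a + t12 * c - 1)).
  by rewrite (resid xt21) (resid tx11) (resid (mulVr Ua))
    (resid (mulVr Uc)); drop0.
- cert (-(a^-1 * a - 1) * t12 * d + c^-1 * (c * t11 + d * t21 - 0) * b
    - (c^-1 * c - 1) * t11 * b - (t11 * b + t12 * d - 0)).
  by rewrite (resid xt21) (resid tx12) (resid (mulVr Ua))
    (resid (mulVr Uc)); drop0.
- cert (b^-1 * (a * t12 + b * t22 - 0) * c - (b^-1 * b - 1) * t22 * c
    - (d^-1 * d - 1) * t21 * a - (t21 * a + t22 * c - 0)).
  by rewrite (resid xt12) (resid tx21) (resid (mulVr Ub))
    (resid (mulVr Ud)); drop0.
- cert (-b^-1 * (a * t12 + b * t22 - 0) * d + (b^-1 * b - 1) * t22 * d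
    + (d^-1 * d - 1) * t21 * b + (t21 * b + t22 * d - 1)).
  by rewrite (resid xt12) (resid tx22) (resid (mulVr Ub))
    (resid (mulVr Ud)); drop0.
- cert (a * (t11 * a + t12 * c - 1) * a^-1 - a * t11 * (a * a^-1 - 1) + (a * a^-1 - 1)
    - a * (t11 * b + t12 * d - 0) * b^-1 + a * t11 * (b * b^-1 - 1)).
  by rewrite (resid tx11) (resid tx12) (resid (mulrV Ua))
    (resid (mulrV Ub)); drop0.
- cert (a * t12 * (c * c^-1 - 1) - a * t12 * (d * d^-1 - 1)).
  by rewrite (resid (mulrV Uc)) (resid (mulrV Ud)); drop0.
- cert (-d * t21 * (a * a^-1 - 1) + d * t21 * (b * b^-1 - 1)).
  by rewrite (resid (mulrV Ua)) (resid (mulrV Ub)); drop0.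
- cert (-d * (t21 * a + t22 * c - 0) * c^-1 + d * t22 * (c * c^-1 - 1)
    + d * (t21 * b + t22 * d - 1) * d^-1 - d * t22 * (d * d^-1 - 1) + (d * d^-1 - 1)).
  by rewrite (resid tx21) (resid tx22) (resid (mulrV Uc))
    (resid (mulrV Ud)); drop0.
Qed.

Lemma schur_complement2_J2 :
  1 - (t11 + t12 + t21 + t22) = -(a^-1 - 1) - (a^-1 - b^-1) * (a * t12 * c) * (c^-1 - a^-1).
Proof.
cert ((a^-1 * a - 1) * t12 * c * c^-1 + t12 * (c * c^-1 - 1)
  - (a^-1 * a - 1) * t12 * c * a^-1 - (t11 * a + t12 * c - 1) * a^-1
  + t11 * (a * a^-1 - 1) - b^-1 * a * t12 * (c * c^-1 - 1)
  - b^-1 * (a * t12 + b * t22 - 0) + (b^-1 * b - 1) * t22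
  + b^-1 * (a * t12 + b * t22 - 0) * c * a^-1 - (b^-1 * b - 1) * t22 * c * a^-1
  - (t21 * a + t22 * c - 0) * a^-1 + t21 * (a * a^-1 - 1)).
by rewrite (resid xt12) (resid tx11) (resid tx21) (resid (mulVr Ua))
  (resid (mulrV Ua)) (resid (mulrV Uc)) (resid (mulVr Ub)); drop0.
Qed.

End InverseJ2.

Lemma mx_inverse2_J2_rot p q r s al be ga de :
  mx_inverse (mx2 p q r s) (mx2 al be ga de) ->
  p \is a GRing.unit -> q \is a GRing.unit -> r \is a GRing.unit -> s \is a GRing.unit ->
  mx_inverse (mx2 s^-1 q^-1 r^-1 p^-1)
    (mx2 (-(r * al * q)) (r * al * p) (p * al * q) (p * be * r)).
Proof.
move=> MN Up Uq Ur Us.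
have := mx_inverse2_J2 (mx_inverse2_swap_cols (mx_inverse2_swap_rows MN)) Us Ur Uq Up.
case/mx_inverse2P: MN => -[_ _ h3 _] [_ h6 _ _].
have -> : s * ga * q = -(r * al * q).
  by cert ((r * al + s * ga - 0) * q); rewrite (resid h3); drop0.
have -> : -(s * ga * p) = r * al * p.
  by cert (-((r * al + s * ga - 0) * p)); rewrite (resid h3); drop0.
have -> // : -(p * be * s) = p * al * q.
by cert (-(p * (al * q + be * s - 0))); rewrite (resid h6); drop0.
Qed.

Lemma mx_inverse2_scale p q r s al be ga de x :
  mx_inverse (mx2 p q r s) (mx2 al be ga de) -> x \is a GRing.unit ->
  mx_inverse (mx2 (p * x) (q * x) (r * x) (s * x))
    (mx2 (x^-1 * al) (x^-1 * be) (x^-1 * ga) (x^-1 * de)).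
Proof.
case/mx_inverse2P => -[h1 h2 h3 h4] [h5 h6 h7 h8] Ux.
have xV := resid (mulrV Ux); have Vx := resid (mulVr Ux).
apply/mx_inverse2P; split; split.
- cert (p * (x * x^-1 - 1) * al + q * (x * x^-1 - 1) * ga + (p * al + q * ga - 1)).
  by rewrite xV (resid h1); drop0.
- cert (p * (x * x^-1 - 1) * be + q * (x * x^-1 - 1) * de + (p * be + q * de - 0)).
  by rewrite xV (resid h2); drop0.
- cert (r * (x * x^-1 - 1) * al + s * (x * x^-1 - 1) * ga + (r * al + s * ga - 0)).
  by rewrite xV (resid h3); drop0.
- cert (r * (x * x^-1 - 1) * be + s * (x * x^-1 - 1) * de + (r * be + s * de - 1)).
  by rewrite xV (resid h4); drop0.
- cert (x^-1 * (al * p + be * r - 1) * x + (x^-1 * x - 1)).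
  by rewrite Vx (resid h5); drop0.
- cert (x^-1 * (al * q + be * s - 0) * x).
  by rewrite (resid h6); drop0.
- cert (x^-1 * (ga * p + de * r - 0) * x).
  by rewrite (resid h7); drop0.
- cert (x^-1 * (ga * q + de * s - 1) * x + (x^-1 * x - 1)).
  by rewrite Vx (resid h8); drop0.
Qed.

Lemma schur_complement2 a b c d t11 t12 t21 t22 al be ga de :
  mx_inverse (mx2 a b c d) (mx2 t11 t12 t21 t22) ->
  mx_inverse (mx2 (a - 1) (b - 1) (c - 1) (d - 1)) (mx2 al be ga de) ->
  (1 + (al + be + ga + de)) * (1 - (t11 + t12 + t21 + t22)) = 1 /\
  (1 - (t11 + t12 + t21 + t22)) * (1 + (al + be + ga + de)) = 1.
Proof.
case/mx_inverse2P => -[x1 x2 x3 x4] [y1 y2 y3 y4].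
case/mx_inverse2P => -[m1 m2 m3 m4] [n1 n2 n3 n4].
split.
- cert ((al * (a - 1) + be * (c - 1) - 1 + (ga * (a - 1) + de * (c - 1) - 0)) * (t11 + t12)
    + (al * (b - 1) + be * (d - 1) - 0 + (ga * (b - 1) + de * (d - 1) - 1)) * (t21 + t22)
    - (al + ga) * (a * t11 + b * t21 - 1 + (a * t12 + b * t22 - 0))
    - (be + de) * (c * t11 + d * t21 - 0 + (c * t12 + d * t22 - 1))).
  by rewrite (resid n1) (resid n2) (resid n3) (resid n4)
    (resid x1) (resid x2) (resid x3) (resid x4); drop0.
- cert ((t11 + t21) * ((a - 1) * al + (b - 1) * ga - 1 + ((a - 1) * be + (b - 1) * de - 0))
    + (t12 + t22) * ((c - 1) * al + (d - 1) * ga - 0 + ((c - 1) * be + (d - 1) * de - 1))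
    - (t11 * a + t12 * c - 1 + (t21 * a + t22 * c - 0)) * (al + be)
    - (t11 * b + t12 * d - 0 + (t21 * b + t22 * d - 1)) * (ga + de)).
  by rewrite (resid m1) (resid m2) (resid m3) (resid m4)
    (resid y1) (resid y2) (resid y3) (resid y4); drop0.
Qed.

Lemma sherman_morrison11 x11 x12 x21 x22 al be ga de t11 t12 t21 t22 tau :
  mx_inverse (mx2 (x11 - 1) (x12 - 1) (x21 - 1) (x22 - 1)) (mx2 al be ga de) ->
  mx_inverse (mx2 x11 x12 x21 x22) (mx2 t11 t12 t21 t22) ->
  (1 + (al + be + ga + de)) * tau = 1 ->
  t11 = al - (al + be) * tau * (al + ga).
Proof.
case/mx_inverse2P => -[yn11 yn12 yn21 yn22] _.
case/mx_inverse2P => _ [tx11 tx12 _ _] htau.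
set u1 := al - (al + be) * tau * (al + ga); set u2 := ga - (ga + de) * tau * (al + ga).
have row1 : x11 * u1 + x12 * u2 = 1.
  rewrite /u1 /u2; cert (((x11 - 1) * al + (x12 - 1) * ga - 1)
    - ((x11 - 1) * al + (x12 - 1) * ga - 1) * tau * (al + ga)
    - ((x11 - 1) * be + (x12 - 1) * de - 0) * tau * (al + ga)
    - ((1 + (al + be + ga + de)) * tau - 1) * (al + ga)).
  by rewrite (resid yn11) (resid yn12) (resid htau); drop0.
have row2 : x21 * u1 + x22 * u2 = 0.
  rewrite /u1 /u2; cert (((x21 - 1) * al + (x22 - 1) * ga - 0)
    - ((x21 - 1) * al + (x22 - 1) * ga - 0) * tau * (al + ga)
    - ((x21 - 1) * be + (x22 - 1) * de - 1) * tau * (al + ga)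
    - ((1 + (al + be + ga + de)) * tau - 1) * (al + ga)).
  by rewrite (resid yn21) (resid yn22) (resid htau); drop0.
cert (-(t11 * (x11 * u1 + x12 * u2 - 1) + t12 * (x21 * u1 + x22 * u2 - 0)
  - (t11 * x11 + t12 * x21 - 1) * u1 - (t11 * x12 + t12 * x22 - 0) * u2)).
by rewrite (resid row1) (resid row2) (resid tx11) (resid tx12); drop0.
Qed.

(** * Hat matrices, [J] and [Phi] *)

Definition i1 : 'I_3 := @Ordinal 3 1 isT.

Definition i2 : 'I_3 := @Ordinal 3 2 isT.

Lemma ord3P (i : 'I_3) : [\/ i = 0, i = i1 | i = i2].
Proof.
by case: i => [[|[|[|//]]] Hi]; [constructor 1|constructor 2|constructor 3]; apply: val_inj.
Qed.

Lemma mulmx3E (M N : 'M[R]_3) i j :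
  (M *m N) i j = M i 0 * N 0 j + M i i1 * N i1 j + M i i2 * N i2 j.
Proof.
rewrite mxE !big_ord_recl big_ord0 addr0 addrA.
have -> : lift ord0 (ord0 : 'I_2) = i1 by apply: val_inj.
by have -> : lift ord0 (lift ord0 (ord0 : 'I_1)) = i2 by apply: val_inj.
Qed.

Definition hat3 x11 x12 x21 x22 : 'M[R]_3 :=
  \matrix_(i, j) match (i : nat), (j : nat) with
     | 1%N, 1%N => x11 | 1%N, 2%N => x12 | 2%N, 1%N => x21 | 2%N, 2%N => x22
     | _, _ => 1 end.

Definition hatinv3 al be ga de : 'M[R]_3 :=
  \matrix_(i, j) match (i : nat), (j : nat) with
     | 0%N, 0%N => 1 + (al + be + ga + de) | 0%N, 1%N => - (al + ga)
     | 0%N, 2%N => - (be + de) | 1%N, 0%N => - (al + be) | 2%N, 0%N => - (ga + de)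
     | 1%N, 1%N => al | 1%N, 2%N => be | 2%N, 1%N => ga | _, _ => de end.

Lemma mx_inverse_hat3 x11 x12 x21 x22 al be ga de :
  mx_inverse (mx2 (x11 - 1) (x12 - 1) (x21 - 1) (x22 - 1)) (mx2 al be ga de) ->
  mx_inverse (hat3 x11 x12 x21 x22) (hatinv3 al be ga de).
Proof.
case/mx_inverse2P => -[h1 h2 h3 h4] [h5 h6 h7 h8].
split; apply/matrixP => i j; rewrite mulmx3E !mxE;
  case: (ord3P i) => ->; case: (ord3P j) => -> /=; try ncring.
- cert (- ((x11 - 1) * al + (x12 - 1) * ga - 1) - ((x11 - 1) * be + (x12 - 1) * de - 0)).
  by rewrite (resid h1) (resid h2); drop0.
- by cert ((x11 - 1) * al + (x12 - 1) * ga - 1); rewrite (resid h1).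
- by cert ((x11 - 1) * be + (x12 - 1) * de - 0); rewrite (resid h2).
- cert (- ((x21 - 1) * al + (x22 - 1) * ga - 0) - ((x21 - 1) * be + (x22 - 1) * de - 1)).
  by rewrite (resid h3) (resid h4); drop0.
- by cert ((x21 - 1) * al + (x22 - 1) * ga - 0); rewrite (resid h3).
- by cert ((x21 - 1) * be + (x22 - 1) * de - 1); rewrite (resid h4).
- cert (- (al * (x11 - 1) + be * (x21 - 1) - 1) - (ga * (x11 - 1) + de * (x21 - 1) - 0)).
  by rewrite (resid h5) (resid h7); drop0.
- cert (- (al * (x12 - 1) + be * (x22 - 1) - 0) - (ga * (x12 - 1) + de * (x22 - 1) - 1)).
  by rewrite (resid h6) (resid h8); drop0.
- by cert (al * (x11 - 1) + be * (x21 - 1) - 1); rewrite (resid h5).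
- by cert (al * (x12 - 1) + be * (x22 - 1) - 0); rewrite (resid h6).
- by cert (ga * (x11 - 1) + de * (x21 - 1) - 0); rewrite (resid h7).
- by cert (ga * (x12 - 1) + de * (x22 - 1) - 1); rewrite (resid h8).
Qed.

(* Subtracting row (column) 0 of [hat3 x11 x12 x21 x22] from the others
   leaves the reduced matrix. *)
Lemma mx_inverse_hat3_block x11 x12 x21 x22 (Y : 'M[R]_3) :
  mx_inverse (hat3 x11 x12 x21 x22) Y ->
  mx_inverse (mx2 (x11 - 1) (x12 - 1) (x21 - 1) (x22 - 1))
    (mx2 (Y i1 i1) (Y i1 i2) (Y i2 i1) (Y i2 i2)).
Proof.
case=> XY YX.
have rowE k j : (hat3 x11 x12 x21 x22 *m Y) k j - (hat3 x11 x12 x21 x22 *m Y) 0 j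
    = (k == j)%:R - (0 == j)%:R by rewrite XY !mxE.
have colE k j : (Y *m hat3 x11 x12 x21 x22) k j - (Y *m hat3 x11 x12 x21 x22) k 0
    = (k == j)%:R - (k == 0)%:R by rewrite YX !mxE.
apply/mx_inverse2P; split; split;
  [move: (rowE i1 i1)|move: (rowE i1 i2)|move: (rowE i2 i1)|move: (rowE i2 i2)
  |move: (colE i1 i1)|move: (colE i1 i2)|move: (colE i2 i1)|move: (colE i2 i2)];
  rewrite !mulmx3E !mxE /= => e; refine (etrans _ (etrans e _)); ncring.
Qed.

Lemma J1_mx_inverse (M N : 'M[R]_3) : mx_inverse M N -> J1 M = Some N.
Proof.
move=> MN; rewrite /J1; case: excluded_middle_informative => [h|[]]; last by exists N.
congr Some; case: (constructive_indefinite_description _ h) => N' MN' /=.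
exact: mx_inverse_unique MN' MN.
Qed.

Lemma allunitP (M : 'M[R]_3) : reflect (forall i j, M i j \is a GRing.unit) (allunit M).
Proof.
apply: (iffP forallP) => [h i j|h i]; first by have /forallP := h i; apply.
by apply/forallP => j; apply: h.
Qed.

Definition J2mx (M : 'M[R]_3) : 'M[R]_3 := \matrix_(j, k) (M k j)^-1.

Lemma J2_allunit (M : 'M[R]_3) : allunit M -> J2 M = Some (J2mx M).
Proof. by rewrite /J2 => ->. Qed.

Lemma allunit_J2mx (M : 'M[R]_3) : allunit M -> allunit (J2mx M).
Proof. by move/allunitP => UM; apply/allunitP => i j; rewrite mxE unitrV. Qed.

Lemma allunit_LamL (M : 'M[R]_3) : allunit M -> allunit (LamL M).
Proof.
by move/allunitP => UM; apply/allunitP => i j; rewrite mxE !unitrM_units ?unitrV.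
Qed.

Lemma hatMP (M : 'M[R]_3) : reflect (forall i, M 0 i = 1 /\ M i 0 = 1) (hatM M).
Proof.
apply: (iffP forallP) => [h i|h i]; first by have /andP[/eqP ? /eqP ?] := h i.
by case: (h i) => -> ->; rewrite !eqxx.
Qed.

Lemma hatM_hat3 x11 x12 x21 x22 : hatM (hat3 x11 x12 x21 x22).
Proof. by apply/hatMP => i; rewrite !mxE; case: (ord3P i) => ->. Qed.

Lemma hat3_hatM (M : 'M[R]_3) : hatM M -> M = hat3 (M i1 i1) (M i1 i2) (M i2 i1) (M i2 i2).
Proof.
move/hatMP => hM; apply/matrixP => i j; rewrite mxE.
case: (ord3P i) => ->; case: (ord3P j) => -> //=;
  by [case: (hM 0) | case: (hM i1) | case: (hM i2)].
Qed.

Lemma allunit_hat3 x11 x12 x21 x22 :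
  x11 \is a GRing.unit -> x12 \is a GRing.unit -> x21 \is a GRing.unit ->
  x22 \is a GRing.unit -> allunit (hat3 x11 x12 x21 x22).
Proof.
move=> U11 U12 U21 U22; apply/allunitP => i j; rewrite mxE.
by case: (ord3P i) => ->; case: (ord3P j) => ->; rewrite /= ?unitr1.
Qed.

Lemma allunit_hatinv3 al be ga de :
  [/\ al \is a GRing.unit, be \is a GRing.unit, ga \is a GRing.unit
    & de \is a GRing.unit] ->
  [/\ al + be \is a GRing.unit, al + ga \is a GRing.unit,
      be + de \is a GRing.unit & ga + de \is a GRing.unit] ->
  1 + (al + be + ga + de) \is a GRing.unit -> allunit (hatinv3 al be ga de).
Proof.
move=> [Ual Ube Uga Ude] [Uab Uag Ubd Ugd] U00; apply/allunitP => i j; rewrite mxE.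
by case: (ord3P i) => ->; case: (ord3P j) => ->; rewrite /= ?unitrN.
Qed.

Lemma J2mx_hat3 x11 x12 x21 x22 :
  J2mx (hat3 x11 x12 x21 x22) = hat3 x11^-1 x21^-1 x12^-1 x22^-1.
Proof.
apply/matrixP => i j; rewrite !mxE.
by case: (ord3P i) => ->; case: (ord3P j) => ->; rewrite /= ?invr1.
Qed.

Lemma J2mx_LamLE (B : 'M[R]_3) j k : allunit B ->
  J2mx (LamL B) j k = B 0 j * (B k j)^-1 * B k 0 * (B 0 0)^-1.
Proof.
move/allunitP => UB; rewrite !mxE invrM ?unitrM_units ?unitrV //.
by rewrite invrM3 ?unitrV // !invrK !mulrA.
Qed.

Lemma hatM_J2mx_LamL (B : 'M[R]_3) : allunit B -> hatM (J2mx (LamL B)).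
Proof.
move=> UB; apply/hatMP => i; rewrite !J2mx_LamLE //; move/allunitP: UB => UB.
by split; [rewrite divrK ?mulrV | rewrite mulrV ?mul1r ?mulrV].
Qed.

Lemma Phi_hat3_some x11 x12 x21 x22 (B : 'M[R]_3) :
  allunit (hat3 x11 x12 x21 x22) -> mx_inverse (hat3 x11 x12 x21 x22) B -> allunit B ->
  Phi (hat3 x11 x12 x21 x22) = Some (J2mx (LamL B)).
Proof.
move=> UA AB UB.
by rewrite /Phi hatM_hat3 UA (J1_mx_inverse AB) UB J2_allunit ?allunit_LamL.
Qed.

Lemma PhiInv_hat3_some x11 x12 x21 x22 (K : 'M[R]_3) :
  allunit (hat3 x11 x12 x21 x22) -> mx_inverse (J2mx (hat3 x11 x12 x21 x22)) K ->
  allunit K -> PhiInv (hat3 x11 x12 x21 x22) = Some (LamR K).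
Proof.
move=> UA AK UK.
by rewrite /PhiInv hatM_hat3 /Jinv J2_allunit // (J1_mx_inverse AK) UK.
Qed.

Definition rescaled (C M : 'M[R]_3) : Prop :=
  exists u v : 'I_3 -> R,
    [/\ forall i, u i \is a GRing.unit, forall j, v j \is a GRing.unit
      & forall i j, C i j = u i * M i j * v j].

Lemma rescaled_allunit (C M : 'M[R]_3) : rescaled C M -> allunit M -> allunit C.
Proof.
move=> [u [v [Uu Uv hC]]] /allunitP UM.
by apply/allunitP => i j; rewrite hC !unitrM_units.
Qed.

Lemma J2mx_LamL_rescaled (C M : 'M[R]_3) : allunit M -> rescaled C (J2mx M) ->
  exists2 x, x \is a GRing.unit & J2mx (LamL C) = conjx x (LamR M).
Proof.
move=> UM CM; have UC := rescaled_allunit CM (allunit_J2mx UM).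
move/allunitP: UM => UM; case: CM => u [v [Uu Uv hC]].
exists (u 0)^-1; first by rewrite unitrV.
apply/matrixP => j k; rewrite J2mx_LamLE // !mxE !hC !mxE.
rewrite !invrM3 ?unitrV // !invrK.
cert (u 0 * (M j 0)^-1 * (v j * (v j)^-1 - 1) * M j k * (u k)^-1 * u k * (M 0 k)^-1 * v 0
    * (v 0)^-1 * M 0 0 * (u 0)^-1
  + u 0 * (M j 0)^-1 * M j k * ((u k)^-1 * u k - 1) * (M 0 k)^-1 * v 0 * (v 0)^-1 * M 0 0
    * (u 0)^-1
  + u 0 * (M j 0)^-1 * M j k * (M 0 k)^-1 * (v 0 * (v 0)^-1 - 1) * M 0 0 * (u 0)^-1).
by rewrite (resid (mulrV (Uv j))) (resid (mulVr (Uu k)))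
  (resid (mulrV (Uv 0))); drop0.
Qed.

Lemma conjx_mxsim x (M : 'M[R]_3) : x \is a GRing.unit -> mxsim (conjx x M) M.
Proof.
move=> Ux; exists x^-1%:M, x%:M, x^-1%:M.
split; first exact: scalar_mx_is_diag.
split; first exact: scalar_mx_is_diag.
split; first by rewrite -scalar_mxM mulVr.
split; first by rewrite -scalar_mxM mulrV.
split; first by exists x%:M; rewrite -!scalar_mxM mulrV ?mulVr.
apply/matrixP => i j; rewrite mul_scalar_mx mulmx3E !mxE.
case: (ord3P j) => -> /=; rewrite ?mulr0n ?mulr1n ?mulr0 ?mul0r ?addr0 ?add0r ?mulr1;
  by rewrite !mulrA mulrV // mul1r mulrK.
Qed.

(** * Phi^2 and Phi^-1 of a hat matrix *)

(* In the application, [[p, q], [r, s]] is the reduced matrix of [J2mx A], [sg] the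
   Schur complement of [A] and [C] the inverse of [Phi A] (see [mx_inverse_PhiA]);
   [Hsg] is [schur_complement2_J2] rewritten by [sherman_morrison11]. *)
Section RescaledJ2.
Variables p q r s al be ga de sg : R.
Hypothesis MN : mx_inverse (mx2 p q r s) (mx2 al be ga de).
Hypotheses (Up : p \is a GRing.unit) (Uq : q \is a GRing.unit)
  (Ur : r \is a GRing.unit) (Us : s \is a GRing.unit).
Hypotheses (Usq : s - q \is a GRing.unit) (Usr : s - r \is a GRing.unit)
  (Uqp : q - p \is a GRing.unit) (Urp : r - p \is a GRing.unit).
Hypothesis Usg : sg \is a GRing.unit.
Hypothesis Hsg : sg = - p
  - (p - r) * (al - (al + be) * (1 + (al + be + ga + de))^-1 * (al + ga)) * (q - p).
Let C := hatinv3 (sg^-1 * (-(r * al * q))) (sg^-1 * (r * al * p))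
  (sg^-1 * (p * al * q)) (sg^-1 * (p * be * r)).
Let u (i : 'I_3) := sg^-1 * match (i : nat) with
  | 0%N => (p - r) * (al + be) | 1%N => -(r * al) | _ => p * be end.
Let v (j : 'I_3) := match (j : nat) with
  | 0%N => (al + ga) * (q - p) | 1%N => al * q | _ => -(ga * p) end.

Lemma hatinv3_corner_rescaled :
  C 0 0 = u 0 * (1 + (al + be + ga + de))^-1 * v 0.
Proof.
have h5 : al * p + be * r = 1 by case/mx_inverse2P: MN => _ [->].
rewrite /C /u /v mxE /=.
cert (-(sg^-1 * sg - 1)
  + sg^-1 * (sg - (- p
    - (p - r) * (al - (al + be) * (1 + (al + be + ga + de))^-1 * (al + ga)) * (q - p)))
  + sg^-1 * p * (al * p + be * r - 1)).
by rewrite (resid (mulVr Usg)) (resid Hsg) (resid h5); drop0.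
Qed.

Lemma hatinv3_rescaled_J2 : rescaled C (J2mx (hatinv3 al be ga de)).
Proof.
have [[h1 h2 h3 h4] [h5 h6 h7 h8]] := iffLR (mx_inverse2P _ _ _ _ _ _ _ _) MN.
have [Ual Ube Uga Ude] := mx_inverse2_units MN Up Uq Ur Us.
have [Ualbe Ualga Ubede Ugade] := mx_inverse2_sums_units MN Up Uq Ur Us Usq Usr Uqp Urp.
have Upr : p - r \is a GRing.unit by rewrite -opprB unitrN.
exists u, v; split.
- by move=> i; case: (ord3P i) => ->;
    rewrite /u /= unitrM_units ?unitrV ?unitrN ?unitrM_units.
- by move=> j; case: (ord3P j) => ->; rewrite /v /= ?unitrN unitrM_units.
move=> i j; case: (ord3P i) => ->; case: (ord3P j) => ->;
  rewrite ?hatinv3_corner_rescaled // /C /u /v !mxE /= ?invrN //.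
- cert (sg^-1 * (p - r) * ((al + be) * (al + be)^-1 - 1) * al * q).
  by rewrite (resid (mulrV Ualbe)); drop0.
- cert (sg^-1 * (-(r * al + s * ga - 0) * p + (p * al + q * ga - 1) * p
      - p * (al * p + be * r - 1))
    - sg^-1 * (s - q) * ((ga + de) * (ga + de)^-1 - 1) * ga * p
    - sg^-1 * ((p * al + q * ga - 1) + (p * be + q * de - 0) - (r * al + s * ga - 0)
      - (r * be + s * de - 1)) * (ga + de)^-1 * ga * p).
  by rewrite (resid h1) (resid h2) (resid h3) (resid h4)
    (resid h5) (resid (mulrV Ugade)); drop0.
- cert (-sg^-1 * r * al * ((al + ga)^-1 * (al + ga) - 1) * (q - p)).
  by rewrite (resid (mulVr Ualga)); drop0.
- cert (sg^-1 * r * (al * al^-1 - 1) * al * q).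
  by rewrite (resid (mulrV Ual)); drop0.
- cert (-sg^-1 * r * al * (ga^-1 * ga - 1) * p).
  by rewrite (resid (mulVr Uga)); drop0.
- cert (-sg^-1 * p * (al * q + be * s - 0)
    + sg^-1 * p * be * ((be + de)^-1 * (be + de) - 1) * (r - s)
    + sg^-1 * p * be * (be + de)^-1 * ((al * q + be * s - 0) - (al * p + be * r - 1)
      + (ga * q + de * s - 1) - (ga * p + de * r - 0))).
  by rewrite (resid h5) (resid h6) (resid h7) (resid h8)
    (resid (mulVr Ubede)); drop0.
- cert (-sg^-1 * p * (be * be^-1 - 1) * al * q).
  by rewrite (resid (mulrV Ube)); drop0.
- cert (sg^-1 * p * be * de^-1 * (ga * p + de * r - 0)
    - sg^-1 * p * be * (de^-1 * de - 1) * r).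
  by rewrite (resid h7) (resid (mulVr Ude)); drop0.
Qed.

End RescaledJ2.

Section HatComputation.
Variables a b c d t11 t12 t21 t22 n11 n12 n21 n22 k11 k12 k21 k22 : R.
Hypotheses (Ua : a \is a GRing.unit) (Ub : b \is a GRing.unit)
  (Uc : c \is a GRing.unit) (Ud : d \is a GRing.unit).
Hypotheses (Ua1 : a - 1 \is a GRing.unit) (Ub1 : b - 1 \is a GRing.unit)
  (Uc1 : c - 1 \is a GRing.unit) (Ud1 : d - 1 \is a GRing.unit).
Hypotheses (Uba : b - a \is a GRing.unit) (Uca : c - a \is a GRing.unit)
  (Udb : d - b \is a GRing.unit) (Udc : d - c \is a GRing.unit).
Hypothesis XT : mx_inverse (mx2 a b c d) (mx2 t11 t12 t21 t22).
Hypothesis YN : mx_inverse (mx2 (a - 1) (b - 1) (c - 1) (d - 1)) (mx2 n11 n12 n21 n22).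
Hypothesis YK :
  mx_inverse (mx2 (a^-1 - 1) (c^-1 - 1) (b^-1 - 1) (d^-1 - 1)) (mx2 k11 k12 k21 k22).

(* [sg] is the Schur complement of [[a, b], [c, d]] in [A = hat3 a b c d]; [B] is
   the inverse of [A] and [K] that of [J2mx A], whose reduced matrix is
   [[p, q], [r, s]]. *)
Let sg := 1 - (t11 + t12 + t21 + t22).
Let B := hatinv3 n11 n12 n21 n22.
Let K := hatinv3 k11 k12 k21 k22.
Let p := a^-1 - 1.
Let q := c^-1 - 1.
Let r := b^-1 - 1.
Let s := d^-1 - 1.
Let Up : p \is a GRing.unit. Proof. by case: (invr_invrB1 Ua Ua1). Qed.
Let Uq : q \is a GRing.unit. Proof. by case: (invr_invrB1 Uc Uc1). Qed.
Let Ur : r \is a GRing.unit. Proof. by case: (invr_invrB1 Ub Ub1). Qed.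
Let Us : s \is a GRing.unit. Proof. by case: (invr_invrB1 Ud Ud1). Qed.

Lemma schur_hat3 : sg \is a GRing.unit /\ (1 + (n11 + n12 + n21 + n22))^-1 = sg.
Proof.
have [h1 h2] := schur_complement2 XT YN.
have [U00 E] := two_sided_invr h1 h2.
by rewrite /sg -E unitrV.
Qed.

Let Usg : sg \is a GRing.unit. Proof. exact: schur_hat3.1. Qed.
Let PhiA := hat3 (1 + s^-1 * sg) (1 + q^-1 * sg) (1 + r^-1 * sg) (1 + p^-1 * sg).
Let PhiA_inv := hatinv3 (sg^-1 * (-(r * k11 * q))) (sg^-1 * (r * k11 * p))
  (sg^-1 * (p * k11 * q)) (sg^-1 * (p * k12 * r)).

Lemma allunit_B : allunit B.
Proof.
have [_ N00] := schur_hat3.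
apply: allunit_hatinv3; first exact: mx_inverse2_units YN Ua1 Ub1 Uc1 Ud1.
  by apply: mx_inverse2_sums_units YN Ua1 Ub1 Uc1 Ud1 _ _ _ _; rewrite subr1B1.
by rewrite -unitrV N00.
Qed.

Lemma J2mx_LamL_B : J2mx (LamL B) = PhiA.
Proof.
have [_ N00] := schur_hat3.
have [F11 F12 F21 F22] := mx_inverse2_colsum_rowsum YN Ua1 Ub1 Uc1 Ud1.
have step m : (1 + (n11 + n12 + n21 + n22) - (1 + m)) * sg = 1 + (- (1 + m)) * sg.
  by rewrite mulrBl (schur_complement2 XT YN).1 mulNr.
have mulrNN3 x y z : - x * y * - z = x * y * z by rewrite mulNr mulrNN.
rewrite (hat3_hatM (hatM_J2mx_LamL allunit_B)) !J2mx_LamLE ?allunit_B // !mxE /=.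
rewrite N00 !mulrNN3 F11 F12 F21 F22 !step.
by rewrite /PhiA /p /q /r /s (invr_invrB1 Ua Ua1).2 (invr_invrB1 Ub Ub1).2
  (invr_invrB1 Uc Uc1).2 (invr_invrB1 Ud Ud1).2.
Qed.

Lemma Phi_hat3 : Phi (hat3 a b c d) = Some PhiA.
Proof.
rewrite (Phi_hat3_some (allunit_hat3 Ua Ub Uc Ud) (mx_inverse_hat3 YN) allunit_B).
by rewrite J2mx_LamL_B.
Qed.

Lemma mx_inverse_PhiA : mx_inverse PhiA PhiA_inv.
Proof.
apply: mx_inverse_hat3.
have -> : mx2 (1 + s^-1 * sg - 1) (1 + q^-1 * sg - 1) (1 + r^-1 * sg - 1)
    (1 + p^-1 * sg - 1) = mx2 (s^-1 * sg) (q^-1 * sg) (r^-1 * sg) (p^-1 * sg).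
  by congr mx2; ncring.
exact: mx_inverse2_scale (mx_inverse2_J2_rot YK Up Uq Ur Us) Usg.
Qed.

Lemma schur_hat3_J2 :
  sg = - p - (p - r) * (k11 - (k11 + k12) * (1 + (k11 + k12 + k21 + k22))^-1 * (k11 + k21))
    * (q - p).
Proof.
have XT' := mx_inverse2_J2 XT Ua Ub Uc Ud.
have [h1 h2] := schur_complement2 XT' YK.
rewrite (two_sided_invr h1 h2).2 -(sherman_morrison11 YK XT' h1).
by rewrite /sg /p /q /r !subr1B1 (schur_complement2_J2 XT Ua Ub Uc).
Qed.

Lemma reduced_J2_diff_units :
  [/\ s - q \is a GRing.unit, s - r \is a GRing.unit,
      q - p \is a GRing.unit & r - p \is a GRing.unit].
Proof.
by split; rewrite subr1B1 subr_invr // !unitrM_units ?unitrV // -opprB unitrN.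
Qed.

Lemma allunit_K : allunit K.
Proof.
have [Usq Usr Uqp Urp] := reduced_J2_diff_units.
have [h1 h2] := schur_complement2 (mx_inverse2_J2 XT Ua Ub Uc Ud) YK.
apply: allunit_hatinv3; first exact: mx_inverse2_units YK Up Uq Ur Us.
  exact: mx_inverse2_sums_units YK Up Uq Ur Us Usq Usr Uqp Urp.
by case: (two_sided_invr h1 h2).
Qed.

Lemma Phi2_PhiInv_hat3 :
  exists2 x, x \is a GRing.unit &
    Phi2 (hat3 a b c d) = Some (conjx x (LamR K)) /\ PhiInv (hat3 a b c d) = Some (LamR K).
Proof.
have [Usq Usr Uqp Urp] := reduced_J2_diff_units.
have CK := hatinv3_rescaled_J2 YK Up Uq Ur Us Usq Usr Uqp Urp Usg schur_hat3_J2.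
have [x Ux Ex] := J2mx_LamL_rescaled allunit_K CK.
exists x => //; split.
  have UPhiA : allunit PhiA by rewrite -J2mx_LamL_B allunit_J2mx ?allunit_LamL ?allunit_B.
  rewrite /Phi2 Phi_hat3 /PhiA (Phi_hat3_some UPhiA mx_inverse_PhiA) ?Ex //.
  exact: rescaled_allunit CK (allunit_J2mx allunit_K).
apply: PhiInv_hat3_some (allunit_hat3 Ua Ub Uc Ud) _ allunit_K.
by rewrite J2mx_hat3; exact: mx_inverse_hat3 YK.
Qed.

End HatComputation.

(** * Matrices of \hat S *)

Definition sel2 (i i' : 'I_3) (k : 'I_2) : 'I_3 := if val k == 0%N then i else i'.

Lemma sel2_homo (i i' : 'I_3) : (i < i')%N -> {homo sel2 i i' : k l / (k < l)%N}.
Proof. by move=> lt [[|[|?]] ?] [[|[|?]] ?]. Qed.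

Lemma mxsub_sel2 (M : 'M[R]_3) i i' j j' :
  mxsub (sel2 i i') (sel2 j j') M = mx2 (M i j) (M i j') (M i' j) (M i' j').
Proof.
by apply/matrixP => k l; rewrite !mxE; case: (ord2P k) => ->; case: (ord2P l) => ->.
Qed.

Lemma inS_unit (M : 'M[R]_3) i j : inS M -> M i j \is a GRing.unit.
Proof.
case=> minor _.
have homo1 (k : 'I_3) : {homo (fun _ : 'I_1 => k) : l l' / (l < l')%N}.
  by move=> [[|?] ?] [[|?] ?].
have [N [/matrixP/(_ 0 0) e1 /matrixP/(_ 0 0) e2]] := minor 1%N _ _ (homo1 i) (homo1 j).
apply/unitrP; exists (N 0 0).
by split; [move: e2 | move: e1]; rewrite !mxE big_ord1 !mxE.
Qed.

Lemma inS_minor2 (M : 'M[R]_3) (i i' j j' : 'I_3) : inS M -> (i < i')%N -> (j < j')%N ->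
  exists al be ga de,
    mx_inverse (mx2 (M i j) (M i j') (M i' j) (M i' j')) (mx2 al be ga de).
Proof.
case=> minor _ lt lt'.
have [N] := minor 2%N _ _ (sel2_homo lt) (sel2_homo lt').
by rewrite mxsub_sel2 (mx2_eta N); exists (N 0 0), (N 0 1), (N 1 0), (N 1 1).
Qed.

Section InSHat3.
Variables a b c d : R.
Hypothesis HS : inS (hat3 a b c d).
Let A := hat3 a b c d.
Let A0 (i : 'I_3) : A 0 i = 1 /\ A i 0 = 1. Proof. exact: hatMP (hatM_hat3 a b c d) i. Qed.
Let minor_row (i' j j' : 'I_3) :
  ((0%R : 'I_3) < i')%N -> (j < j')%N -> A i' j' - A i' j \is a GRing.unit.
Proof.
move=> lt lt'; have [al [be [ga [de]]]] := inS_minor2 HS lt lt'.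
by rewrite (A0 j).1 (A0 j').1; apply: mx_inverse2_unit_row.
Qed.
Let minor_col (i i' j' : 'I_3) :
  (i < i')%N -> ((0%R : 'I_3) < j')%N -> A i' j' - A i j' \is a GRing.unit.
Proof.
move=> lt lt'; have [al [be [ga [de]]]] := inS_minor2 HS lt lt'.
by rewrite (A0 i).2 (A0 i').2; apply: mx_inverse2_unit_col.
Qed.

Lemma hat3_units :
  [/\ a \is a GRing.unit, b \is a GRing.unit, c \is a GRing.unit & d \is a GRing.unit].
Proof.
by split; [move: (inS_unit i1 i1 HS)|move: (inS_unit i1 i2 HS)
  |move: (inS_unit i2 i1 HS)|move: (inS_unit i2 i2 HS)]; rewrite mxE.
Qed.

Lemma hat3_reduced_units :
  [/\ a - 1 \is a GRing.unit, b - 1 \is a GRing.unit,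
      c - 1 \is a GRing.unit & d - 1 \is a GRing.unit].
Proof.
by split; [move: (@minor_row i1 0 i1)|move: (@minor_row i1 0 i2)
  |move: (@minor_row i2 0 i1)|move: (@minor_row i2 0 i2)]; rewrite /A !mxE; apply.
Qed.

Lemma hat3_diff_units :
  [/\ b - a \is a GRing.unit, c - a \is a GRing.unit,
      d - b \is a GRing.unit & d - c \is a GRing.unit].
Proof.
by split; [move: (@minor_row i1 i1 i2)|move: (@minor_col i1 i2 i1)
  |move: (@minor_col i1 i2 i2)|move: (@minor_row i2 i1 i2)]; rewrite /A !mxE; apply.
Qed.

Lemma inS_hat3_Phi2_PhiInv :
  exists2 x, x \is a GRing.unit & exists P,
    Phi2 (hat3 a b c d) = Some (conjx x P) /\ PhiInv (hat3 a b c d) = Some P.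
Proof.
have [Ua Ub Uc Ud] := hat3_units.
have [Ua1 Ub1 Uc1 Ud1] := hat3_reduced_units.
have [Uba Uca Udb Udc] := hat3_diff_units.
have [t11 [t12 [t21 [t22]]]] := inS_minor2 HS (isT : (i1 < i2)%N) (isT : (i1 < i2)%N).
rewrite !mxE /= => XT.
have [Y AY] := HS.1 3%N id id (fun _ _ => id) (fun _ _ => id).
rewrite mxsub_id in AY; have YN := mx_inverse_hat3_block AY.
have [N' [J2A [K JK]]] := HS.2.
move: J2A; rewrite J2_allunit ?allunit_hat3 // J2mx_hat3 => -[NE].
rewrite -NE in JK; have YK := mx_inverse_hat3_block JK.
have [x Ux [E2 Einv]] :=
  Phi2_PhiInv_hat3 Ua Ub Uc Ud Ua1 Ub1 Uc1 Ud1 Uba Uca Udb Udc XT YN YK.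
by exists x => //; exists (LamR (hatinv3 (K i1 i1) (K i1 i2) (K i2 i1) (K i2 i2))).
Qed.

End InSHat3.

End HatMatrices.

Theorem theorem3 (R : unitRingType) (A : 'M[R]_3) :
  inShat A ->
  exists (x : R) (P2 Pinv : 'M[R]_3),
    x \is a GRing.unit /\
    Phi2 A = Some P2 /\ PhiInv A = Some Pinv /\
    P2 = conjx x Pinv /\ mxsim P2 Pinv.
Proof.
move=> [HS /hat3_hatM AE]; rewrite AE in HS *.
have [x Ux [P [E2 Einv]]] := inS_hat3_Phi2_PhiInv HS.
by exists x, (conjx x P), P; do !split=> //; apply: conjx_mxsim.
Qed.
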